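(* Let $X\subseteq\{0,1\}^n$, $f:X\to\{0,1\}$, $c>0$, and let $\{\ket{v_{x,i}}\in\mathbb{R}^m\}_{x\in X,i\in[n]}$ be a real $f$-deciding vector set of size $A$. Let $\ket{\psi_x}$ ($f(x)=1$), $\ket{\phi_x}$ ($f(x)=0$), $\kappa$, $\{\ket{\zeta_j}\}_{j\in[\kappa]}$, $\alpha_{j,x}$, the set $V$, $\varepsilon$, $S$, and the compressed vectors $\ket{\psi_x'},\ket{\phi_x'},\ket{\zeta_j'}$ be as described in the context. Then: (1) for all $j,l\in[\kappa]$, $|\braket{\zeta_j'}{\zeta_l'}-\delta_{j,l}|\le 4\varepsilon$; (2) for all $j\in[\kappa]$ and $x\in f^{-1}(0)$, $|\braket{\zeta_j'}{\phi_x'}|\le 2\varepsilon(c+1)A$; (3) for all $x$ with $f(x)=1$, $\big|\|\ket{\psi_x'}\|^2-1\big|\le 4\varepsilon\kappa$, and for all $x$ with $f(x)=0$, $\big|\|\ket{\phi_x'}\|-1\big|\le 3\varepsilon$.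
   Context: An $f$-deciding vector set $\{\ket{v_{x,i}}\}$ satisfies $\sum_{i:x_i\ne y_i}\braket{v_{x,i}}{v_{y,i}}=1$ for all $x,y\in X$ with $f(x)\ne f(y)$; its size is $A=\max_{x}\sum_i\|\ket{v_{x,i}}\|^2$. Let $\mathcal{H}=\mathbb{R}\oplus(\mathbb{R}^n\otimes\mathbb{R}^m\otimes\mathbb{R}^2)$ with $\ket{\hat 0}$ a unit vector spanning the first summand. For $f(x)=1$ let $\ket{\psi_x}=\frac{1}{\sqrt{\nu_x}}\big(\ket{\hat0}+\frac{1}{\sqrt{cA}}\sum_{i}\ket{i}\ket{v_{x,i}}\ket{x_i}\big)$ with $\nu_x=1+\frac{1}{cA}\sum_i\|\ket{v_{x,i}}\|^2$ (so $\|\ket{\psi_x}\|=1$); for $f(x)=0$ let $\ket{\phi_x}=\frac{1}{\sqrt{\mu_x}}\big(\ket{\hat0}-\sqrt{cA}\sum_i\ket{i}\ket{v_{x,i}}\ket{\bar x_i}\big)$ with $\mu_x=1+cA\sum_i\|\ket{v_{x,i}}\|^2$, where $\bar x_i=1-x_i$. Let $\kappa$ be the dimension of $\operatorname{span}\{\ket{\psi_x}:f(x)=1\}$, let $\{\ket{\zeta_j}\}_{j\in[\kappa]}$ be an orthonormal basis of this span, and fix real numbers $\alpha_{j,x}$ with $\ket{\zeta_j}=\sum_{x:f(x)=1}\alpha_{j,x}\ket{\psi_x}$. For $j\in[\kappa],i\in[n],b\in\{0,1\}$ let $\ket{C_{j,i,b}}=\sum_{x:f(x)=1,x_i=b}\frac{\alpha_{j,x}}{\sqrt{\nu_x}}\ket{v_{x,i}}$,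 and let $V=\{\ket{C_{j,i,b}}\}\cup\{\ket{v_{y,i}}:f(y)=0,i\in[n]\}\subset\mathbb{R}^m$. Let $\varepsilon>0$ and let $S\in\mathbb{R}^{N\times m}$ satisfy $(1-\varepsilon)\|u-v\|^2\le\|Su-Sv\|^2\le(1+\varepsilon)\|u-v\|^2$ for all $u,v\in V\cup\{0\}$ (a Johnson–Lindenstrauss compression of $V\cup\{0\}$). Let $T=\ket{\hat0}\bra{\hat0}+I_n\otimes S\otimes I_2$, mapping $\mathcal H$ to $\mathbb{R}\oplus(\mathbb{R}^n\otimes\mathbb{R}^N\otimes\mathbb{R}^2)$, and set $\ket{\psi_x'}=T\ket{\psi_x}$, $\ket{\phi_x'}=T\ket{\phi_x}$, $\ket{\zeta_j'}=T\ket{\zeta_j}$. *)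

From mathcomp Require Import all_boot all_order all_algebra.
Set Implicit Arguments. Unset Strict Implicit. Unset Printing Implicit Defensive.
Import Order.TTheory GRing.Theory Num.Theory.
Local Open Scope ring_scope.

(* Bit strings x in {0,1}^n, with x_i = x i (false = 0, true = 1). *)
Definition BV (n : nat) := {ffun 'I_n -> bool}.

Definition dotv (R : rcfType) (m : nat) (u w : 'cV[R]_m) : R :=
  \sum_(k < m) u k 0 * w k 0.
Definition norm2v (R : rcfType) (m : nat) (u : 'cV[R]_m) : R := dotv u u.

(* H = R (+) (R^n (x) R^m (x) R^2): a scalar (coefficient of |0^>) and, for
   each (i, b) in [n] x {0,1}, the block in R^m multiplying |i>|.>|b>. *)
Definition Hsp (R : rcfType) (n m : nat) :=
  (R^o * {ffun 'I_n * bool -> 'cV[R]_m})%type.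

Definition hdot (R : rcfType) (n m : nat) (p q : Hsp R n m) : R :=
  p.1 * q.1 + \sum_(ib : 'I_n * bool) dotv (p.2 ib) (q.2 ib).
Definition hnorm2 (R : rcfType) (n m : nat) (p : Hsp R n m) : R := hdot p p.

Definition ket0 (R : rcfType) (n m : nat) : Hsp R n m := (1 : R^o, 0).
Definition ketivb (R : rcfType) (n m : nat) (i : 'I_n) (u : 'cV[R]_m) (b : bool)
  : Hsp R n m := (0 : R^o, [ffun ib => if ib == (i, b) then u else 0]).

(* T = |0^><0^| + I_n (x) S (x) I_2 *)
Definition Tmap (R : rcfType) (n m N : nat) (S : 'M[R]_(N, m)) (p : Hsp R n m)
  : Hsp R n N := (p.1, [ffun ib => S *m p.2 ib]).

Definition sizeA (R : rcfType) (n m : nat) (X : {set BV n})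
  (v : BV n -> 'I_n -> 'cV[R]_m) : R :=
  \big[Num.max/0]_(x in X) \sum_(i < n) norm2v (v x i).

Definition deciding (R : rcfType) (n m : nat) (X : {set BV n}) (f : BV n -> bool)
  (v : BV n -> 'I_n -> 'cV[R]_m) : Prop :=
  forall x y, x \in X -> y \in X -> f x != f y ->
    \sum_(i < n | x i != y i) dotv (v x i) (v y i) = 1.

Definition nu_ (R : rcfType) (n m : nat) (c A : R) (v : BV n -> 'I_n -> 'cV[R]_m)
  (x : BV n) : R := 1 + (c * A)^-1 * \sum_(i < n) norm2v (v x i).
Definition mu_ (R : rcfType) (n m : nat) (c A : R) (v : BV n -> 'I_n -> 'cV[R]_m)
  (x : BV n) : R := 1 + (c * A) * \sum_(i < n) norm2v (v x i).

Definition psi_ (R : rcfType) (n m : nat) (c A : R) (v : BV n -> 'I_n -> 'cV[R]_m)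
  (x : BV n) : Hsp R n m :=
  (Num.sqrt (nu_ c A v x))^-1 *:
    (ket0 R n m + (Num.sqrt (c * A))^-1 *: \sum_(i < n) ketivb i (v x i) (x i)).
Definition phi_ (R : rcfType) (n m : nat) (c A : R) (v : BV n -> 'I_n -> 'cV[R]_m)
  (x : BV n) : Hsp R n m :=
  (Num.sqrt (mu_ c A v x))^-1 *:
    (ket0 R n m - Num.sqrt (c * A) *: \sum_(i < n) ketivb i (v x i) (~~ x i)).

Definition Cvec (R : rcfType) (n m kappa : nat) (X : {set BV n}) (f : BV n -> bool)
  (c A : R) (v : BV n -> 'I_n -> 'cV[R]_m) (alpha : 'I_kappa -> BV n -> R)
  (j : 'I_kappa) (i : 'I_n) (b : bool) : 'cV[R]_m :=
  \sum_(x in X | f x && (x i == b)) (alpha j x / Num.sqrt (nu_ c A v x)) *: v x i.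

Definition inV (R : rcfType) (n m kappa : nat) (X : {set BV n}) (f : BV n -> bool)
  (c A : R) (v : BV n -> 'I_n -> 'cV[R]_m) (alpha : 'I_kappa -> BV n -> R)
  (u : 'cV[R]_m) : Prop :=
  (exists j i b, u = Cvec X f c A v alpha j i b) \/
  (exists y i, [/\ y \in X, f y = false & u = v y i]).

(* Away from the |0^> coordinate, T acts blockwise by S.  Hence for vectors
   whose (i, b)-blocks are multiples a U_ib and b W_ib of vectors in V u {0},
   <Tp, Tq> - <p, q> = a b sum_ib (<S U_ib, S W_ib> - <U_ib, W_ib>), which the
   Johnson-Lindenstrauss property bounds by polarization.  The blocks of zeta_j
   are (cA)^(-1/2) C_{j,i,b} and those of phi_x are -(cA/mu_x)^(1/2) v_{x,i};
   since zeta_j and phi_x are unit vectors, their blocks have total squared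
   norm at most 1, which gives (1) and the bound on ||phi_x'||.  For (2), the
   deciding condition makes the block part of <psi_y, phi_x> cancel its
   |0^> part exactly, so zeta_j is orthogonal to phi_x.  For (3), writing
   psi_x = sum_j beta_j zeta_j with sum_j beta_j^2 = 1, the deviation is at
   most 4 eps sum_{j,l} |beta_j beta_l| <= 4 eps kappa. *)

From HB Require Import structures.
From mathcomp Require Import all_boot all_order all_algebra.
From mathcomp Require Import ring lra.
Import Order.TTheory GRing.Theory Num.Theory.
Local Open Scope ring_scope.
Set Implicit Arguments. Unset Strict Implicit.

Lemma mulr_invsqrtr (R : rcfType) (z : R) :
  0 <= z -> (Num.sqrt z)^-1 * (Num.sqrt z)^-1 = z^-1.
Proof. by move=> z_ge0; rewrite -expr2 exprVn sqr_sqrtr. Qed.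

Lemma dist_sqrtr1_le (R : rcfType) (h : R) : `|Num.sqrt h - 1| <= `|h - 1|.
Proof.
have [h_ge0|h_lt0] := leP 0 h; last first.
  by rewrite ltr0_sqrtr // sub0r normrN normr1 ltr0_norm; lra.
have sqrt_ge0 := sqrtr_ge0 h.
have -> : h - 1 = (Num.sqrt h - 1) * (Num.sqrt h + 1).
  by rewrite -subr_sqr sqr_sqrtr // expr1n.
by rewrite normrM ler_peMr ?normr_ge0 // ger0_norm; lra.
Qed.

Lemma sum_normr_mul_le (R : realFieldType) k (b : 'I_k -> R) :
  \sum_j \sum_l `|b j * b l| <= k%:R * \sum_j b j ^+ 2.
Proof.
have amgm j l : `|b j * b l| <= (b j ^+ 2 + b l ^+ 2) / 2.
  have := sqr_ge0 (b j + b l); have := sqr_ge0 (b j - b l).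
  by rewrite sqrrB sqrrD ler_norml => *; apply/andP; split; lra.
apply: le_trans (ler_sum _ (fun j _ => ler_sum _ (fun l _ => amgm j l))) _.
rewrite (eq_bigr (fun j => (b j ^+ 2 *+ k + \sum_l b l ^+ 2) / 2)) => [|j _].
  rewrite -mulr_suml big_split /= sumr_const card_ord sumrMnl mulr_natl.
  by set T := _ *+ k; lra.
by rewrite -mulr_suml big_split /= sumr_const card_ord.
Qed.

Section InnerProduct.
Variables (R : rcfType) (m : nat).
Implicit Types (u w : 'cV[R]_m) (a : R).

Lemma dotvC u w : dotv u w = dotv w u.
Proof. by apply: eq_bigr => k _; rewrite mulrC. Qed.

Lemma dotv_is_linear u : linear_for *%R (dotv u).
Proof.
move=> a w w'; rewrite /dotv mulr_sumr -big_split; apply: eq_bigr => k _.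
by rewrite !mxE mulrDr mulrCA.
Qed.

HB.instance Definition _ u :=
  GRing.isLinear.Build R 'cV[R]_m R _ (dotv u) (dotv_is_linear u).

Lemma dotvZl a u w : dotv (a *: u) w = a * dotv u w.
Proof. by rewrite dotvC linearZ dotvC. Qed.

Lemma dotv0l w : dotv 0 w = 0.
Proof. by rewrite dotvC linear0. Qed.

Lemma norm2vZ a u : norm2v (a *: u) = a ^+ 2 * norm2v u.
Proof. by rewrite /norm2v dotvZl linearZ /= mulrA -expr2. Qed.

Lemma norm2v_ge0 u : 0 <= norm2v u.
Proof. by apply: sumr_ge0 => k _; rewrite -expr2 sqr_ge0. Qed.

Lemma norm2vB u w : norm2v (u - w) = norm2v u + norm2v w - 2 * dotv u w.
Proof.
rewrite /norm2v linearB /= !(dotvC (u - w)) !linearB /= (dotvC w u); ring.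
Qed.

Lemma norm2vD u w : norm2v (u + w) = norm2v u + norm2v w + 2 * dotv u w.
Proof.
rewrite /norm2v linearD /= !(dotvC (u + w)) !linearD /= (dotvC w u); ring.
Qed.

Lemma dotv_le_norm2v u w : 2 * dotv u w <= norm2v u + norm2v w.
Proof. by have := norm2v_ge0 (u - w); rewrite norm2vB subr_ge0. Qed.

End InnerProduct.

Section HilbertSpace.
Variables (R : rcfType) (n m : nat).
Implicit Types (p q : Hsp R n m) (a b : R).

Lemma hdotC p q : hdot p q = hdot q p.
Proof. by rewrite /hdot mulrC; congr (_ + _); apply: eq_bigr => ib _; rewrite dotvC. Qed.

Lemma hdot_is_linear p : linear_for *%R (hdot p).
Proof.
move=> a q q'; rewrite /hdot /= -[a *: q.1]/(a * q.1).
under eq_bigr do rewrite !ffunE linearD linearZ.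
by rewrite big_split -mulr_sumr /=; ring.
Qed.

HB.instance Definition _ p :=
  GRing.isLinear.Build R (Hsp R n m) R _ (hdot p) (hdot_is_linear p).

Lemma hdot_comb k (b : 'I_k -> R) (F G : 'I_k -> Hsp R n m) :
  hdot (\sum_j b j *: F j) (\sum_l b l *: G l) =
  \sum_j \sum_l b j * b l * hdot (F j) (G l).
Proof.
rewrite linear_sum; under eq_bigr do rewrite linearZ /= hdotC linear_sum mulr_sumr.
rewrite exchange_big; apply: eq_bigr => j _; apply: eq_bigr => l _.
by rewrite linearZ /= hdotC mulrCA mulrA.
Qed.

Lemma snd_sum I (r : seq I) (P : pred I) (F : I -> Hsp R n m) ib :
  (\sum_(i <- r | P i) F i).2 ib = \sum_(i <- r | P i) (F i).2 ib.
Proof. by elim/big_rec2: _ => [|i a b _ <-]; rewrite /= ffunE. Qed.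

Lemma sndZ a p ib : (a *: p).2 ib = a *: p.2 ib.
Proof. by rewrite /= ffunE. Qed.

Lemma hnorm2_snd_le p : \sum_ib norm2v (p.2 ib) <= hnorm2 p.
Proof. by rewrite /hnorm2 /hdot lerDr -expr2 sqr_ge0. Qed.

Lemma hdot_scaled_blocks p q a b (U W : 'I_n * bool -> 'cV[R]_m) :
  (forall ib, p.2 ib = a *: U ib) -> (forall ib, q.2 ib = b *: W ib) ->
  hdot p q = p.1 * q.1 + a * b * \sum_ib dotv (U ib) (W ib).
Proof.
move=> pU qW; rewrite /hdot mulr_sumr; congr (_ + _); apply: eq_bigr => ib _.
by rewrite pU qW dotvZl linearZ /= mulrA.
Qed.

End HilbertSpace.

Section BlockMap.
Variables (R : rcfType) (n m N : nat) (S : 'M[R]_(N, m)).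
Implicit Types (p q : Hsp R n m) (a b : R).

Lemma Tmap_is_linear : linear (@Tmap R n m N S).
Proof.
move=> a p q; rewrite /Tmap /=; congr pair; apply/ffunP => ib.
by rewrite !ffunE mulmxDr scalemxAr.
Qed.

HB.instance Definition _ :=
  GRing.isLinear.Build R (Hsp R n m) (Hsp R n N) _ (Tmap S) Tmap_is_linear.

Lemma hdot_Tmap_sub p q a b (U W : 'I_n * bool -> 'cV[R]_m) :
  (forall ib, p.2 ib = a *: U ib) -> (forall ib, q.2 ib = b *: W ib) ->
  hdot (Tmap S p) (Tmap S q) - hdot p q =
  a * b * \sum_ib (dotv (S *m U ib) (S *m W ib) - dotv (U ib) (W ib)).
Proof.
move=> pU qW; rewrite (hdot_scaled_blocks pU qW).
rewrite (@hdot_scaled_blocks R n N _ _ a b (fun ib => S *m U ib) (fun ib => S *m W ib)).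
- by rewrite sumrB /=; ring.
- by move=> ib; rewrite /= ffunE pU scalemxAr.
- by move=> ib; rewrite /= ffunE qW scalemxAr.
Qed.

Lemma hnorm2_Tmap_comb_sub k (b : 'I_k -> R) (z : 'I_k -> Hsp R n m) :
  hnorm2 (Tmap S (\sum_j b j *: z j)) - hnorm2 (\sum_j b j *: z j) =
  \sum_j \sum_l b j * b l * (hdot (Tmap S (z j)) (Tmap S (z l)) - hdot (z j) (z l)).
Proof.
rewrite linear_sum /hnorm2; under eq_bigr do rewrite linearZ.
rewrite !hdot_comb -sumrB; apply: eq_bigr => j _.
by rewrite -sumrB; apply: eq_bigr => l _; rewrite mulrBr.
Qed.

End BlockMap.

Section JohnsonLindenstrauss.
Variables (R : rcfType) (m N : nat).

Definition jl_embedding (eps : R) (S : 'M[R]_(N, m)) (P : 'cV[R]_m -> Prop) :=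
  forall u w, P u -> P w ->
    (1 - eps) * norm2v (u - w) <= norm2v (S *m u - S *m w) /\
    norm2v (S *m u - S *m w) <= (1 + eps) * norm2v (u - w).

Variables (eps : R) (S : 'M[R]_(N, m)) (P : 'cV[R]_m -> Prop).
Hypotheses (eps_ge0 : 0 <= eps) (S_jl : jl_embedding eps S P) (P0 : P 0).

Lemma jl_norm2v_dev u : P u -> `|norm2v (S *m u) - norm2v u| <= eps * norm2v u.
Proof.
move=> Pu; have [lo hi] := S_jl Pu P0; rewrite mulmx0 !subr0 in lo hi.
by rewrite ler_norml; apply/andP; split; lra.
Qed.

(* Polarization: 2 <u, w> = |u|^2 + |w|^2 - |u - w|^2, and S distorts each of
   these squared norms by a factor within [1 - eps, 1 + eps]. *)
Lemma jl_dotv_dev u w : P u -> P w ->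
  `|dotv (S *m u) (S *m w) - dotv u w| <= 2 * eps * (norm2v u + norm2v w).
Proof.
move=> Pu Pw; have [lo hi] := S_jl Pu Pw.
have := jl_norm2v_dev Pu; rewrite ler_norml => /andP[lou hiu].
have := jl_norm2v_dev Pw; rewrite ler_norml => /andP[low hiw].
have eps_uw := mulr_ge0 eps_ge0 (addr_ge0 (norm2v_ge0 u) (norm2v_ge0 w)).
have := mulr_ge0 eps_ge0 (norm2v_ge0 (u + w)).
have := mulr_ge0 eps_ge0 (norm2v_ge0 (u - w)).
move: lo hi; rewrite !norm2vB norm2vD => lo hi eps_m eps_p.
by rewrite ler_norml; apply/andP; split; lra.
Qed.

Variable n : nat.
Implicit Types (p q : Hsp R n m) (a b : R).

Lemma hdot_Tmap_dev p q a b (U W : 'I_n * bool -> 'cV[R]_m) :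
  (forall ib, p.2 ib = a *: U ib) -> (forall ib, q.2 ib = b *: W ib) ->
  (forall ib, P (U ib)) -> (forall ib, P (W ib)) ->
  `|hdot (Tmap S p) (Tmap S q) - hdot p q| <=
  `|a * b| * (2 * eps * (\sum_ib norm2v (U ib) + \sum_ib norm2v (W ib))).
Proof.
move=> pU qW PU PW; rewrite (hdot_Tmap_sub S pU qW) normrM ler_wpM2l //.
rewrite -big_split mulr_sumr; apply: le_trans (ler_norm_sum _ _ _) (ler_sum _ _).
by move=> ib _; apply: jl_dotv_dev.
Qed.

Lemma hnorm2_Tmap_dev p a (U : 'I_n * bool -> 'cV[R]_m) :
  (forall ib, p.2 ib = a *: U ib) -> (forall ib, P (U ib)) ->
  `|hnorm2 (Tmap S p) - hnorm2 p| <= eps * \sum_ib norm2v (p.2 ib).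
Proof.
move=> pU PU; rewrite /hnorm2 (hdot_Tmap_sub S pU pU) normrM -expr2 ger0_norm ?sqr_ge0 //.
have -> : \sum_ib norm2v (p.2 ib) = a ^+ 2 * \sum_ib norm2v (U ib).
  by rewrite mulr_sumr; apply: eq_bigr => ib _; rewrite pU norm2vZ.
rewrite mulrCA ler_wpM2l ?sqr_ge0 // mulr_sumr.
by apply: le_trans (ler_norm_sum _ _ _) (ler_sum _ _) => ib _; apply: jl_norm2v_dev.
Qed.

End JohnsonLindenstrauss.

Section Blocks.
Variables (R : rcfType) (n m : nat).
Implicit Types (u w : 'I_n -> 'cV[R]_m) (g h : 'I_n -> bool).

Definition blockv u g (ib : 'I_n * bool) : 'cV[R]_m :=
  if g ib.1 == ib.2 then u ib.1 else 0.

Lemma ketsum_fst u g : (\sum_i ketivb i (u i) (g i)).1 = 0.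
Proof. by elim/big_rec: _ => //= i p _ ->; rewrite add0r. Qed.

Lemma ketsum_snd u g ib : (\sum_i ketivb i (u i) (g i)).2 ib = blockv u g ib.
Proof.
rewrite snd_sum; under eq_bigr do rewrite ffunE.
case: ib => j b; rewrite -big_mkcond /blockv /=.
rewrite (eq_bigl (fun i => (i == j) && (g i == b))) => [|i]; last first.
  by rewrite xpair_eqE eq_sym [b == _]eq_sym.
by rewrite big_mkcondr big_pred1_eq.
Qed.

Lemma sum_dotv_blockv u g w h :
  \sum_ib dotv (blockv u g ib) (blockv w h ib) =
  \sum_(i | g i == h i) dotv (u i) (w i).
Proof.
rewrite -(pair_bigA _ (fun i b => dotv (blockv u g (i, b)) (blockv w h (i, b)))).
rewrite [RHS]big_mkcond; apply: eq_bigr => i _; rewrite big_bool /blockv /=.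
by case: (g i); case: (h i); rewrite /= ?linear0 ?dotv0l ?addr0 ?add0r.
Qed.

Lemma sum_norm2v_blockv u g :
  \sum_ib norm2v (blockv u g ib) = \sum_i norm2v (u i).
Proof. by rewrite sum_dotv_blockv; apply: eq_bigl => i; rewrite eqxx. Qed.

Lemma blockv_in (P : 'cV[R]_m -> Prop) u g ib :
  P 0 -> (forall i, P (u i)) -> P (blockv u g ib).
Proof. by rewrite /blockv; case: ifP. Qed.

End Blocks.

Section States.
Variables (R : rcfType) (n m : nat) (c A : R) (v : BV n -> 'I_n -> 'cV[R]_m).
Implicit Types (x y : BV n).

Lemma psi_fst x : (psi_ c A v x).1 = (Num.sqrt (nu_ c A v x))^-1.
Proof. by rewrite /psi_ /= ketsum_fst scaler0 addr0; apply: mulr1. Qed.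

Lemma psi_snd x ib : (psi_ c A v x).2 ib =
  ((Num.sqrt (nu_ c A v x))^-1 * (Num.sqrt (c * A))^-1) *: blockv (v x) x ib.
Proof. by rewrite /psi_ /= !ffunE ketsum_snd add0r scalerA. Qed.

Lemma phi_fst x : (phi_ c A v x).1 = (Num.sqrt (mu_ c A v x))^-1.
Proof. by rewrite /phi_ /= ketsum_fst scaler0 subr0; apply: mulr1. Qed.

Lemma phi_snd x ib : (phi_ c A v x).2 ib =
  (- ((Num.sqrt (mu_ c A v x))^-1 * Num.sqrt (c * A))) *:
    blockv (v x) (fun i => ~~ x i) ib.
Proof. by rewrite /phi_ /= !ffunE ketsum_snd add0r scalerN scalerA scaleNr. Qed.

Lemma hdot_psi_phi y x : 0 < c * A ->
  \sum_(i | y i != x i) dotv (v y i) (v x i) = 1 ->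
  hdot (psi_ c A v y) (phi_ c A v x) = 0.
Proof.
move=> cA_gt0 dec_yx.
rewrite (hdot_scaled_blocks (psi_snd y) (phi_snd x)) psi_fst phi_fst sum_dotv_blockv.
rewrite (eq_bigl (fun i => y i != x i)) => [|i]; last by case: (y i); case: (x i).
rewrite dec_yx; set t := Num.sqrt (c * A).
have st : t^-1 * t = 1 by rewrite mulVf // sqrtr_eq0 -ltNge.
set r := (Num.sqrt (nu_ c A v y))^-1; set r' := (Num.sqrt (mu_ c A v x))^-1.
by transitivity (r * r' * (1 - t^-1 * t)); [ring | rewrite st subrr mulr0].
Qed.

Hypothesis cA_ge0 : 0 <= c * A.

Lemma nu_ge1 x : 1 <= nu_ c A v x.
Proof.
by rewrite lerDl mulr_ge0 ?invr_ge0 // sumr_ge0 // => i _; apply: norm2v_ge0.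
Qed.

Lemma mu_ge1 x : 1 <= mu_ c A v x.
Proof. by rewrite lerDl mulr_ge0 // sumr_ge0 // => i _; apply: norm2v_ge0. Qed.

Lemma hnorm2_psi x : hnorm2 (psi_ c A v x) = 1.
Proof.
rewrite /hnorm2 (hdot_scaled_blocks (psi_snd x) (psi_snd x)) psi_fst.
rewrite sum_norm2v_blockv.
set r := (Num.sqrt _)^-1; set s := (Num.sqrt (c * A))^-1.
have nu_gt0 := lt_le_trans ltr01 (nu_ge1 x).
transitivity (r * r * (1 + s * s * \sum_i norm2v (v x i))); first ring.
by rewrite !mulr_invsqrtr ?(ltW nu_gt0) // -/(nu_ c A v x) mulVf ?gt_eqF.
Qed.

Lemma hnorm2_phi x : hnorm2 (phi_ c A v x) = 1.
Proof.
rewrite /hnorm2 (hdot_scaled_blocks (phi_snd x) (phi_snd x)) phi_fst.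
rewrite sum_norm2v_blockv.
set r := (Num.sqrt _)^-1; set t := Num.sqrt (c * A).
have mu_gt0 := lt_le_trans ltr01 (mu_ge1 x).
transitivity (r * r * (1 + t ^+ 2 * \sum_i norm2v (v x i))); first ring.
by rewrite mulr_invsqrtr ?(ltW mu_gt0) // sqr_sqrtr // -/(mu_ c A v x) mulVf ?gt_eqF.
Qed.

End States.

Section Size.
Variables (R : rcfType) (n m : nat) (X : {set BV n}) (v : BV n -> 'I_n -> 'cV[R]_m).

Lemma sizeA_ge0 : 0 <= sizeA X v.
Proof.
by rewrite /sizeA; elim/big_rec: _ => // x a _ a_ge0; rewrite le_max a_ge0 orbT.
Qed.

Lemma sum_norm2v_le_sizeA x : x \in X -> \sum_i norm2v (v x i) <= sizeA X v.
Proof. exact: (le_bigmax_cond 0 (fun x => \sum_i norm2v (v x i))). Qed.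

Lemma sizeA_ge1 (f : BV n -> bool) x y : deciding X f v ->
  x \in X -> y \in X -> f x != f y -> 1 <= sizeA X v.
Proof.
move=> v_dec xX yX fxy.
have : 2 * \sum_(i | x i != y i) dotv (v x i) (v y i) <=
       \sum_i norm2v (v x i) + \sum_i norm2v (v y i).
  rewrite mulr_sumr -big_split /= big_mkcond.
  apply: ler_sum => i _; case: ifP => _; first exact: dotv_le_norm2v.
  exact: addr_ge0 (norm2v_ge0 _) (norm2v_ge0 _).
rewrite v_dec // mulr1.
by have := sum_norm2v_le_sizeA xX; have := sum_norm2v_le_sizeA yX; lra.
Qed.

End Size.

Section Compression.
Variables (R : rcfType) (n m N : nat) (X : {set BV n}) (f : BV n -> bool).
Variables (c : R) (v : BV n -> 'I_n -> 'cV[R]_m) (kappa : nat).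
Variables (zeta : 'I_kappa -> Hsp R n m) (alpha : 'I_kappa -> BV n -> R).
Variables (eps : R) (S : 'M[R]_(N, m)).

Local Notation A := (sizeA X v).
Local Notation psi := (psi_ c A v).
Local Notation phi := (phi_ c A v).
Local Notation T := (Tmap S).
Local Notation C j ib := (Cvec X f c A v alpha j ib.1 ib.2).
Local Notation inV0 u := (inV X f c A v alpha u \/ u = 0).

Hypotheses (c_gt0 : 0 < c) (v_deciding : deciding X f v).
Hypothesis zeta_orthonormal : forall j l, hdot (zeta j) (zeta l) = (j == l)%:R.
Hypothesis zeta_def : forall j, zeta j = \sum_(x in X | f x) alpha j x *: psi x.
Hypothesis psi_in_span : forall x, x \in X -> f x ->
  exists beta : 'I_kappa -> R, psi x = \sum_j beta j *: zeta j.
Hypotheses (eps_gt0 : 0 < eps) (S_jl : jl_embedding eps S (fun u => inV0 u)).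

Lemma cA_ge0 : 0 <= c * A.
Proof. exact: mulr_ge0 (ltW c_gt0) (sizeA_ge0 X v). Qed.

Lemma zeta_snd j ib : (zeta j).2 ib = (Num.sqrt (c * A))^-1 *: C j ib.
Proof.
case: ib => i b; rewrite zeta_def snd_sum /Cvec scaler_sumr.
rewrite (eq_bigl _ _ (fun x => andbA _ _ _)) [RHS]big_mkcondr; apply: eq_bigr => x _.
rewrite sndZ psi_snd /blockv /=.
by case: ifP => _; rewrite ?scaler0 // !scalerA; congr (_ *: _); ring.
Qed.

Lemma Cvec_in j ib : inV0 (C j ib).
Proof. by left; left; exists j, ib.1, ib.2. Qed.

Lemma blockv_phi_in x : x \in X -> f x = false ->
  forall ib, inV0 (blockv (v x) (fun i => ~~ x i) ib).
Proof.
move=> xX fx ib; apply: (blockv_in (P := fun u => inV0 u)) => [|i]; first by right.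
by left; right; exists x, i.
Qed.

Lemma sum_norm2v_Cvec_le j :
  (Num.sqrt (c * A))^-1 ^+ 2 * \sum_ib norm2v (C j ib) <= 1.
Proof.
rewrite mulr_sumr (eq_bigr (fun ib => norm2v ((zeta j).2 ib))) => [|ib _].
  by have := hnorm2_snd_le (zeta j); rewrite /hnorm2 zeta_orthonormal eqxx.
by rewrite zeta_snd norm2vZ.
Qed.

Lemma hdot_zeta_phi j x : x \in X -> f x = false -> hdot (zeta j) (phi x) = 0.
Proof.
move=> xX fx; rewrite zeta_def hdotC linear_sum big1 // => y /andP[yX fy].
have fyx : f y != f x by rewrite fx fy.
rewrite linearZ /= hdotC hdot_psi_phi ?mulr0 ?v_deciding //.
exact: mulr_gt0 c_gt0 (lt_le_trans ltr01 (sizeA_ge1 v_deciding yX xX fyx)).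
Qed.

Lemma hdot_Tmap_zeta_dev j l :
  `|hdot (T (zeta j)) (T (zeta l)) - (j == l)%:R| <= 4 * eps.
Proof.
rewrite -zeta_orthonormal.
apply: le_trans (hdot_Tmap_dev (ltW eps_gt0) S_jl (or_intror erefl)
  (zeta_snd j) (zeta_snd l) (Cvec_in j) (Cvec_in l)) _.
have := sum_norm2v_Cvec_le j; have := sum_norm2v_Cvec_le l.
rewrite -expr2 ger0_norm ?sqr_ge0 //; set s2 := _ ^+ 2 => le_l le_j.
have le2 : s2 * \sum_ib norm2v (C j ib) + s2 * \sum_ib norm2v (C l ib) <= 2 by lra.
rewrite mulrCA mulrDr (le_trans (ler_wpM2l _ le2)) ?(mulr_ge0 _ (ltW eps_gt0)) //; lra.
Qed.

Lemma hdot_Tmap_zeta_phi_le j x : x \in X -> f x = false ->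
  `|hdot (T (zeta j)) (T (phi x))| <= 2 * eps * (c + 1) * A.
Proof.
move=> xX fx.
have := hdot_Tmap_dev (ltW eps_gt0) S_jl (or_intror erefl)
  (zeta_snd j) (phi_snd c A v x) (Cvec_in j) (blockv_phi_in xX fx).
rewrite hdot_zeta_phi // subr0 sum_norm2v_blockv => /le_trans; apply.
have := sizeA_ge0 X v; rewrite le_eqVlt => /orP[/eqP A0|A_gt0].
  by rewrite -A0 mulr0 sqrtr0 !mulr0 oppr0 mulr0 normr0 mul0r.
set t := Num.sqrt (c * A); set r := (Num.sqrt (mu_ c A v x))^-1.
have t_gt0 : 0 < t by rewrite sqrtr_gt0 mulr_gt0.
have mu_x_ge1 := mu_ge1 v cA_ge0 x.
have r_ge0 : 0 <= r by rewrite invr_ge0 sqrtr_ge0.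
have r_le1 : r <= 1.
  rewrite invf_le1 ?sqrtr_gt0 ?(lt_le_trans ltr01) //.
  by rewrite -sqrtr1 ler_sqrt ?(le_trans ler01).
have C_le : \sum_ib norm2v (C j ib) <= c * A.
  have := sum_norm2v_Cvec_le j.
  by rewrite exprVn sqr_sqrtr ?cA_ge0 // mulrC ler_pdivrMr ?mul1r ?mulr_gt0.
rewrite mulrN normrN [t^-1 * _]mulrCA mulVf ?gt_eqF // mulr1 ger0_norm //.
rewrite mulrCA -[2 * eps * (c + 1) * A]mulrA ler_wpM2l ?(mulr_ge0 _ (ltW eps_gt0)) //.
apply: le_trans (ler_piMl _ r_le1) _.
  by rewrite addr_ge0 // sumr_ge0 // => *; apply: norm2v_ge0.
by rewrite mulrDl mul1r lerD // sum_norm2v_le_sizeA.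
Qed.

Lemma hnorm2_Tmap_psi_dev x : x \in X -> f x ->
  `|hnorm2 (T (psi x)) - 1| <= 4 * eps * kappa%:R.
Proof.
move=> xX fx; have [beta psi_x] := psi_in_span xX fx.
have psi1 := hnorm2_psi v cA_ge0 x.
have beta_sqr : \sum_j beta j ^+ 2 = 1.
  rewrite -psi1 psi_x /hnorm2 hdot_comb; apply: eq_bigr => j _.
  rewrite (bigD1 j) //= zeta_orthonormal eqxx mulr1 big1 ?addr0 // => l /negbTE lj.
  by rewrite zeta_orthonormal eq_sym lj mulr0.
rewrite -[X in `|_ - X|]psi1 psi_x hnorm2_Tmap_comb_sub.
apply: le_trans (ler_norm_sum _ _ _) _.
apply: le_trans (ler_sum _ (fun j _ => ler_norm_sum _ _ _)) _.
apply: le_trans (_ : \sum_j \sum_l `|beta j * beta l| * (4 * eps) <= _).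
  apply: ler_sum => j _; apply: ler_sum => l _.
  by rewrite normrM ler_wpM2l // zeta_orthonormal hdot_Tmap_zeta_dev.
under eq_bigr do rewrite -mulr_suml.
rewrite -mulr_suml mulrC ler_wpM2l ?(mulr_ge0 _ (ltW eps_gt0)) //.
by have := sum_normr_mul_le beta; rewrite beta_sqr mulr1.
Qed.

Lemma norm_Tmap_phi_dev x : x \in X -> f x = false ->
  `|Num.sqrt (hnorm2 (T (phi x))) - 1| <= 3 * eps.
Proof.
move=> xX fx; apply: le_trans (dist_sqrtr1_le _) _.
have phi1 := hnorm2_phi v cA_ge0 x.
rewrite -[X in `|_ - X|]phi1.
apply: le_trans (hnorm2_Tmap_dev S_jl (or_intror erefl)
  (phi_snd c A v x) (blockv_phi_in xX fx)) _.
have := hnorm2_snd_le (phi x); rewrite phi1 => snd_le1.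
have := ler_wpM2l (ltW eps_gt0) snd_le1; rewrite mulr1 => /le_trans; apply.
by have := eps_gt0; lra.
Qed.

End Compression.

Theorem lemma12 (R : rcfType) (n m N : nat) (X : {set BV n}) (f : BV n -> bool)
  (c : R) (v : BV n -> 'I_n -> 'cV[R]_m) (kappa : nat)
  (zeta : 'I_kappa -> Hsp R n m) (alpha : 'I_kappa -> BV n -> R)
  (eps : R) (S : 'M[R]_(N, m)) :
  0 < c ->
  deciding X f v ->
  let A := sizeA X v in
  let psi := psi_ c A v in
  let phi := phi_ c A v in
  (* {zeta_j} is an orthonormal basis of span{psi_x : f(x) = 1} *)
  (forall j l : 'I_kappa, hdot (zeta j) (zeta l) = (j == l)%:R) ->
  (forall j, zeta j = \sum_(x in X | f x) alpha j x *: psi x) ->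
  (forall x, x \in X -> f x ->
     exists beta : 'I_kappa -> R, psi x = \sum_(j < kappa) beta j *: zeta j) ->
  0 < eps ->
  (* S is a JL compression of V u {0} *)
  (forall u w : 'cV[R]_m,
     (inV X f c A v alpha u \/ u = 0) -> (inV X f c A v alpha w \/ w = 0) ->
     (1 - eps) * norm2v (u - w) <= norm2v (S *m u - S *m w) /\
     norm2v (S *m u - S *m w) <= (1 + eps) * norm2v (u - w)) ->
  let T := Tmap S in
  [/\ (forall j l : 'I_kappa,
         `|hdot (T (zeta j)) (T (zeta l)) - (j == l)%:R| <= 4 * eps),
      (forall j x, x \in X -> f x = false ->
         `|hdot (T (zeta j)) (T (phi x))| <= 2 * eps * (c + 1) * A),
      (forall x, x \in X -> f x ->
         `|hnorm2 (T (psi x)) - 1| <= 4 * eps * kappa%:R) &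
      (forall x, x \in X -> f x = false ->
         `|Num.sqrt (hnorm2 (T (phi x))) - 1| <= 3 * eps)].
Proof.
move=> c_gt0 v_dec A psi phi zeta_on zeta_def psi_span eps_gt0 S_jl T.
split=> [j l | j x xX fx | x xX fx | x xX fx].
- exact: (hdot_Tmap_zeta_dev zeta_on zeta_def eps_gt0 S_jl).
- exact: (hdot_Tmap_zeta_phi_le c_gt0 v_dec zeta_on zeta_def eps_gt0 S_jl).
- exact: (hnorm2_Tmap_psi_dev c_gt0 zeta_on zeta_def psi_span eps_gt0 S_jl).
- exact: (norm_Tmap_phi_dev c_gt0 eps_gt0 S_jl).
Qed.
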